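(* Let $A\subseteq X$ and $B\subseteq Y$ be Frölicher subspaces with inclusions $i:A\hookrightarrow X$, $j:B\hookrightarrow Y$. If $(X,A)$ and $(Y,B)$ are SNDR pairs, then $(X\times Y,(X\times B)\cup(A\times Y))$ is an SNDR pair. If, in addition, one of $(X,A)$ or $(Y,B)$ is an SDR pair, then $(X\times Y,(X\times B)\cup(A\times Y))$ is an SDR pair.
   Context: A Frölicher space is a triple $(X,\mathcal C_X,\mathcal F_X)$ with $\mathcal C_X\subseteq X^{\mathbb R}$, $\mathcal F_X\subseteq\mathbb R^X$, such that $\mathcal F_X=\{f\mid f\circ c\in C^\infty(\mathbb R,\mathbb R)\ \forall c\in\mathcal C_X\}$ and $\mathcal C_X=\{c\mid f\circ c\in C^\infty(\mathbb R,\mathbb R)\ \forall f\in\mathcal F_X\}$. A map $\varphi:X\to Y$ is smooth if $g\circ\varphi\in\mathcal F_X$ for all $g\in\mathcal F_Y$. Subspaces carry the initial structure (generated by restrictions of structure functions); products the structure generated by $f\circ\pi_i$; $(X\times B)\cup(A\times Y)$ is a subspace of $X\times Y$. $I$ is $[0,1]$ with the subspace structure from $\mathbb R$ ($\mathcal F_I$ its structure functions). $\mathbf I$ is $[0,1]$ with the structure generated by those $f\in\mathcal F_I$ for which some $0<\epsilon<1/4$ has $f$ constant on $[0,\epsilon)$ and on $(1-\epsilon,1]$. FCIP: Let $i:A\to X$ be smooth. For a structure curve $x:\mathbb R\to X$ let $\Lambda(x,i)$ be the set of $s_*\in x^{-1}(i(A))$ that are limits of sequences $s_n\in x^{-1}(X\setminus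 i(A))$. A structure function $f$ on $\mathbf I\times X$ has the FCIP with respect to $i$ if $f\circ c$ is $C^\infty$ for every map $c=(t,x):\mathbb R\to[0,1]\times X$ such that $x$ is a structure curve of $X$ and, for every $\epsilon>0$, $t$ is $C^\infty$ on every open interval disjoint from $\bigcup_{s_*\in\Lambda(x,i)}[s_*-\epsilon,s_*+\epsilon]$. A map $g:\mathbf I\times X\to Y$ has the FCIP w.r.t. $i$ if $h\circ g$ does for every $h\in\mathcal F_Y$. SNDR/SDR pair: for a smooth inclusion $i:A\hookrightarrow X$, $(X,A)$ is an SNDR pair if there are a smooth $u:X\to\mathbf I$ with $u^{-1}(0)=i(A)$ and a smooth $H:\mathbf I\times X\to X$ having the FCIP w.r.t. $i$, with $H(0,x)=x$ for all $x$, $H(t,a)=a$ for all $t$ and $a\in i(A)$, and $H(1,x)\in i(A)$ whenever $u(x)<1$; it is an SDR pair if moreover $H(1,x)\in i(A)$ for all $x\in X$. *)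

From Stdlib Require Import Reals.
Open Scope R_scope.

Definition smoothRR (g : R -> R) : Prop :=
  exists D : nat -> R -> R, D 0%nat = g /\
    forall (n : nat) (x : R), derivable_pt_lim (D n) x (D (S n) x).

Definition smooth_on (a b : R) (g : R -> R) : Prop :=
  exists D : nat -> R -> R, (forall x, a < x < b -> D 0%nat x = g x) /\
    forall (n : nat) (x : R), a < x < b -> derivable_pt_lim (D n) x (D (S n) x).

Record Frol := mkFrol {
  carrier :> Type;
  curves : (R -> carrier) -> Prop;
  funs : (carrier -> R) -> Prop;
  funs_spec : forall f, funs f <-> (forall c, curves c -> smoothRR (fun s => f (c s)));
  curves_spec : forall c, curves c <-> (forall f, funs f -> smoothRR (fun s => f (c s)))
}.

Definition gen_curves {S : Type} (F0 : (S -> R) -> Prop) (c : R -> S) : Prop :=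
  forall f, F0 f -> smoothRR (fun s => f (c s)).
Definition gen_funs {S : Type} (F0 : (S -> R) -> Prop) (f : S -> R) : Prop :=
  forall c, gen_curves F0 c -> smoothRR (fun s => f (c s)).

Lemma gen_funs_spec {S : Type} (F0 : (S -> R) -> Prop) :
  forall f, gen_funs F0 f <-> (forall c, gen_curves F0 c -> smoothRR (fun s => f (c s))).
Proof. intros f; split; intros H; exact H. Qed.

Lemma gen_curves_spec {S : Type} (F0 : (S -> R) -> Prop) :
  forall c, gen_curves F0 c <-> (forall f, gen_funs F0 f -> smoothRR (fun s => f (c s))).
Proof.
  intros c; split.
  - intros Hc f Hf. apply Hf. exact Hc.
  - intros H f0 Hf0. apply H. intros c' Hc'. apply Hc'. exact Hf0.
Qed.

Definition generated (S : Type) (F0 : (S -> R) -> Prop) : Frol :=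
  mkFrol S (gen_curves F0) (gen_funs F0) (gen_funs_spec F0) (gen_curves_spec F0).

(** Subspace: initial structure, generated by restrictions of structure functions. *)
Definition subspace (X : Frol) (P : X -> Prop) : Frol :=
  generated {x : X | P x}
    (fun g => exists f, funs X f /\ g = (fun y => f (proj1_sig y))).

Definition prodF (X Y : Frol) : Frol :=
  generated (X * Y)%type
    (fun g => (exists f, funs X f /\ g = (fun p => f (fst p))) \/
              (exists f, funs Y f /\ g = (fun p => f (snd p)))).

Definition smooth_map (X Y : Frol) (phi : X -> Y) : Prop :=
  forall g, funs Y g -> funs X (fun x => g (phi x)).

(** The real line (structure generated by the identity: curves = C^oo curves). *)
Definition Rline : Frol := generated R (fun g => g = (fun x => x)).

Definition Ityp : Type := {t : R | 0 <= t <= 1}.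

Definition Iunit : Frol := subspace Rline (fun t => 0 <= t <= 1).

Definition BoldI : Frol :=
  generated Ityp
    (fun f : Ityp -> R => funs Iunit f /\
       exists eps, 0 < eps < 1/4 /\
         (forall s t : Ityp, proj1_sig s < eps -> proj1_sig t < eps -> f s = f t) /\
         (forall s t : Ityp, 1 - eps < proj1_sig s -> 1 - eps < proj1_sig t -> f s = f t)).

Definition Lambda (X : Frol) (P : X -> Prop) (x : R -> X) (s : R) : Prop :=
  P (x s) /\ exists sn : nat -> R, (forall n, ~ P (x (sn n))) /\ Un_cv sn s.

Definition FCIP_fun (X : Frol) (P : X -> Prop) (f : prodF BoldI X -> R) : Prop :=
  forall (t : R -> Ityp) (x : R -> X),
    curves X x ->
    (forall eps, eps > 0 -> forall a b, a < b ->
       (forall r, a < r < b -> forall s, Lambda X P x s -> ~ (s - eps <= r <= s + eps)) ->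
       smooth_on a b (fun r => proj1_sig (t r))) ->
    smoothRR (fun r => f (t r, x r)).

Definition FCIP_map (X : Frol) (P : X -> Prop) (Y : Frol) (g : prodF BoldI X -> Y) : Prop :=
  forall h, funs Y h -> FCIP_fun X P (fun p => h (g p)).

Definition SNDR_data (X : Frol) (P : X -> Prop) (u : X -> BoldI) (H : prodF BoldI X -> X) : Prop :=
  smooth_map X BoldI u /\
  (forall x, proj1_sig (u x) = 0 <-> P x) /\
  smooth_map (prodF BoldI X) X H /\
  FCIP_map X P X H /\
  (forall (t : Ityp) x, proj1_sig t = 0 -> H (t, x) = x) /\
  (forall (t : Ityp) a, P a -> H (t, a) = a) /\
  (forall (t : Ityp) x, proj1_sig t = 1 -> proj1_sig (u x) < 1 -> P (H (t, x))).

Definition SNDR (X : Frol) (P : X -> Prop) : Prop :=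
  exists u H, SNDR_data X P u H.

Definition SDR (X : Frol) (P : X -> Prop) : Prop :=
  exists u H, SNDR_data X P u H /\
    (forall (t : Ityp) x, proj1_sig t = 1 -> P (H (t, x))).

(** Given SNDR data [(u1, h1)] for [(X, A)] and [(u2, h2)] for [(Y, B)] we build
    SNDR data for [(X * Y, X * B \/ A * Y)]:
      u (x, y)    = lam (u1 x) * lam (u2 y),
      H (t, x, y) = (h1 (xi t * gate12, x), h2 (xi t * gate21, y)),
    where [lam], [rho], [xi] are rescalings of a smooth step function and
    [gate12 = rho (lam (u2 y) / lam (u1 x))] (1 when [x] is in [A]).  The gate
    vanishes near [X * B], so that [H] fixes the subspace, and at time 1 one of
    the two gates is 1, so that one factor is retracted.

    The key analytic lemma says that the gated time is smooth
    near every parameter outside [Lambda]; with the FCIP of [h1], [h2] this gives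
    smoothness and the FCIP of [H]. *)

From Stdlib Require Import Reals.
From Stdlib Require Import Lra Lia ClassicalEpsilon FunctionalExtensionality Classical.
Open Scope R_scope.

(** * Smooth real functions on open subsets of R *)

Definition open_set (Om : R -> Prop) : Prop :=
  forall x, Om x -> exists d, 0 < d /\ forall y, Rabs (y - x) < d -> Om y.
Definition ball (x d : R) : R -> Prop := fun y => Rabs (y - x) < d.
Definition univR : R -> Prop := fun _ => True.

Lemma ball_open x d : open_set (ball x d).
Proof.
  intros y Hy. unfold ball in *. exists (d - Rabs (y - x)). split; [lra|].
  intros z Hz. replace (z - x) with ((z - y) + (y - x)) by ring.
  pose proof (Rabs_triang (z - y) (y - x)). lra.
Qed.

Lemma univR_open : open_set univR.
Proof. intros x _. exists 1. split; [lra|]. intros; exact I. Qed.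

Lemma interval_open a b : open_set (fun x => a < x < b).
Proof.
  intros x Hx. exists (Rmin (x - a) (b - x)). split.
  - apply Rmin_glb_lt; lra.
  - intros y Hy. pose proof (Rmin_l (x - a) (b - x)). pose proof (Rmin_r (x - a) (b - x)).
    apply Rabs_def2 in Hy. lra.
Qed.

Lemma ball_Rmin r r0 d1 d2 :
  Rabs (r - r0) < Rmin d1 d2 -> Rabs (r - r0) < d1 /\ Rabs (r - r0) < d2.
Proof. intros H. pose proof (Rmin_l d1 d2). pose proof (Rmin_r d1 d2). lra. Qed.

Lemma Rmin_pos d1 d2 : 0 < d1 -> 0 < d2 -> 0 < Rmin d1 d2.
Proof. intros; apply Rmin_glb_lt; auto. Qed.

Lemma derivable_pt_lim_local f g x l :
  (exists d, 0 < d /\ forall y, Rabs (y - x) < d -> f y = g y) ->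
  derivable_pt_lim f x l -> derivable_pt_lim g x l.
Proof.
  intros [d [Hd Hfg]] H eps Heps. destruct (H eps Heps) as [del Hdel].
  assert (Hm : 0 < Rmin del d) by (apply Rmin_pos; [apply cond_pos | lra]).
  exists (mkposreal _ Hm). intros h Hh0 Hh. simpl in Hh.
  rewrite <- (Hfg (x + h)), <- (Hfg x).
  - apply Hdel; auto. pose proof (Rmin_l del d). lra.
  - rewrite Rminus_diag, Rabs_R0. lra.
  - replace (x + h - x) with h by ring. pose proof (Rmin_r del d). lra.
Qed.

(** Unlike [smoothRR], this
    formulation does not fix the derivatives globally, which makes
    smoothness a local property and gives easy closure lemmas. *)
Fixpoint Ck (Om : R -> Prop) (k : nat) (f : R -> R) : Prop :=
  match k with
  | O => True
  | S k => exists f', (forall x, Om x -> derivable_pt_lim f x (f' x)) /\ Ck Om k f'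
  end.

Definition smooth_in (Om : R -> Prop) (f : R -> R) : Prop := forall k, Ck Om k f.

Lemma Ck_weaken Om k f : Ck Om (S k) f -> Ck Om k f.
Proof.
  revert f. induction k as [|k IH]; intros f H; [exact I|].
  destruct H as [f' [Hd Hc]]. exists f'. split; auto.
Qed.

Lemma Ck_ext Om k f g : open_set Om -> (forall x, Om x -> f x = g x) -> Ck Om k f -> Ck Om k g.
Proof.
  intros Ho. revert f g. induction k as [|k IH]; intros f g He H; [exact I|].
  destruct H as [f' [Hd Hc]]. exists f'. split; auto.
  intros x Hx. apply derivable_pt_lim_local with f; auto.
  destruct (Ho x Hx) as [d [Hd' Hb]]. exists d; split; auto.
Qed.

Lemma smooth_in_ext Om f g :
  open_set Om -> (forall x, Om x -> f x = g x) -> smooth_in Om f -> smooth_in Om g.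
Proof. intros Ho He H k. apply Ck_ext with f; auto. Qed.

Lemma smooth_in_sub Om Om' f : (forall x, Om' x -> Om x) -> smooth_in Om f -> smooth_in Om' f.
Proof.
  intros Hs H k. specialize (H k). revert f H.
  induction k as [|k IH]; intros f H; [exact I|].
  destruct H as [f' [Hd Hc]]. exists f'. split; auto.
Qed.

Lemma smooth_in_const Om c : smooth_in Om (fun _ => c).
Proof.
  intro k. revert c. induction k as [|k IH]; intros c; [exact I|].
  exists (fun _ => 0). split; auto. intros x _. apply derivable_pt_lim_const.
Qed.

Lemma smooth_in_id Om : smooth_in Om (fun x => x).
Proof.
  intros [|k]; [exact I|]. exists (fun _ => 1). split.
  - intros x _. apply derivable_pt_lim_id.
  - apply smooth_in_const.
Qed.

Lemma Ck_plus Om k f g : Ck Om k f -> Ck Om k g -> Ck Om k (fun x => f x + g x).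
Proof.
  revert f g. induction k as [|k IH]; intros f g Hf Hg; [exact I|].
  destruct Hf as [f' [Hfd Hfc]]. destruct Hg as [g' [Hgd Hgc]].
  exists (fun x => f' x + g' x). split; auto.
  intros x Hx. apply (derivable_pt_lim_plus f g x); auto.
Qed.

Lemma Ck_mult Om k f g : Ck Om k f -> Ck Om k g -> Ck Om k (fun x => f x * g x).
Proof.
  revert f g. induction k as [|k IH]; intros f g Hf Hg; [exact I|].
  pose proof (Ck_weaken _ _ _ Hf) as Hf0. pose proof (Ck_weaken _ _ _ Hg) as Hg0.
  destruct Hf as [f' [Hfd Hfc]]. destruct Hg as [g' [Hgd Hgc]].
  exists (fun x => f' x * g x + f x * g' x). split.
  - intros x Hx. apply (derivable_pt_lim_mult f g x); auto.
  - apply Ck_plus; apply IH; auto.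
Qed.

Lemma smooth_in_plus Om f g : smooth_in Om f -> smooth_in Om g -> smooth_in Om (fun x => f x + g x).
Proof. intros Hf Hg k; apply Ck_plus; auto. Qed.

Lemma smooth_in_mult Om f g : smooth_in Om f -> smooth_in Om g -> smooth_in Om (fun x => f x * g x).
Proof. intros Hf Hg k; apply Ck_mult; auto. Qed.

Lemma smooth_in_affine Om a b : smooth_in Om (fun x => a * x + b).
Proof.
  apply smooth_in_plus; [|apply smooth_in_const].
  apply smooth_in_mult; [apply smooth_in_const | apply smooth_in_id].
Qed.

(** A chosen derivative (0 where none exists). *)
Definition der (f : R -> R) (x : R) : R :=
  match excluded_middle_informative (exists l, derivable_pt_lim f x l) with
  | left H => proj1_sig (constructive_indefinite_description _ H)
  | right _ => 0
  end.

Lemma der_spec f x l : derivable_pt_lim f x l -> der f x = l.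
Proof.
  intros H. unfold der. destruct excluded_middle_informative as [e|n].
  - destruct constructive_indefinite_description as [l' Hl']. simpl.
    eapply uniqueness_limite; eauto.
  - exfalso; apply n; eauto.
Qed.

Lemma smooth_in_der Om f : open_set Om -> smooth_in Om f ->
  (forall x, Om x -> derivable_pt_lim f x (der f x)) /\ smooth_in Om (der f).
Proof.
  intros Ho H. split.
  - intros x Hx. destruct (H 1%nat) as [f' [Hd _]]. rewrite (der_spec f x (f' x)); auto.
  - intro k. destruct (H (S k)) as [f' [Hd Hc]].
    apply Ck_ext with f'; auto. intros x Hx. symmetry; apply der_spec; auto.
Qed.

Lemma smooth_in_comp Om G f : smooth_in univR G -> smooth_in Om f -> smooth_in Om (fun x => G (f x)).
Proof.
  intros HG Hf k. specialize (Hf k). revert G f HG Hf.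
  induction k as [|k IH]; intros G f HG Hf; [exact I|].
  pose proof (Ck_weaken _ _ _ Hf) as Hf0.
  destruct Hf as [f' [Hfd Hfc]].
  destruct (smooth_in_der univR G univR_open HG) as [HGd HGs].
  exists (fun x => der G (f x) * f' x). split.
  - intros x Hx. exact (derivable_pt_lim_comp f G x _ _ (Hfd x Hx) (HGd (f x) I)).
  - apply Ck_mult; auto.
Qed.

Lemma smooth_in_inv Om f :
  (forall x, Om x -> f x <> 0) -> smooth_in Om f -> smooth_in Om (fun x => / f x).
Proof.
  intros Hnz Hf k. specialize (Hf k). revert f Hnz Hf.
  induction k as [|k IH]; intros f Hnz Hf; [exact I|].
  pose proof (Ck_weaken _ _ _ Hf) as Hf0.
  destruct Hf as [f' [Hfd Hfc]].
  exists (fun x => (-1) * f' x * (/ f x * / f x)). split.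
  - intros x Hx.
    pose proof (derivable_pt_lim_div (fun _ => 1) f x 0 (f' x)
                  (derivable_pt_lim_const 1 x) (Hfd x Hx) (Hnz x Hx)) as H.
    unfold div_fct in H.
    replace (fun x => / f x) with (fun x => 1 / f x)
      by (apply functional_extensionality; intro; unfold Rdiv; ring).
    replace ((-1) * f' x * (/ f x * / f x)) with ((0 * f x - f' x * 1) / (f x)²)
      by (unfold Rsqr; field; auto).
    exact H.
  - apply Ck_mult; [apply Ck_mult; [apply smooth_in_const | auto]|].
    apply Ck_mult; apply IH; auto.
Qed.

Lemma smooth_in_local Om f : open_set Om ->
  (forall x, Om x -> exists d, 0 < d /\ smooth_in (ball x d) f) -> smooth_in Om f.
Proof.
  intros Ho H k. revert f H. induction k as [|k IH]; intros f H; [exact I|].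
  exists (der f). split.
  - intros x Hx. destruct (H x Hx) as [d [Hd Hs]].
    apply (proj1 (smooth_in_der _ f (ball_open x d) Hs)).
    unfold ball. rewrite Rminus_diag, Rabs_R0. auto.
  - apply IH. intros x Hx. destruct (H x Hx) as [d [Hd Hs]]. exists d. split; auto.
    apply (proj2 (smooth_in_der _ f (ball_open x d) Hs)).
Qed.

Fixpoint iter_der (n : nat) (f : R -> R) : R -> R :=
  match n with O => f | S n => iter_der n (der f) end.

Lemma smooth_in_tower Om f : open_set Om -> smooth_in Om f ->
  forall n x, Om x -> derivable_pt_lim (iter_der n f) x (iter_der (S n) f x).
Proof.
  intros Ho Hf n. revert f Hf. induction n as [|n IH]; intros f Hf x Hx.
  - apply (proj1 (smooth_in_der Om f Ho Hf)); auto.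
  - apply (IH (der f)); auto. apply (proj2 (smooth_in_der Om f Ho Hf)).
Qed.

Lemma tower_Ck Om (D : nat -> R -> R) :
  (forall n x, Om x -> derivable_pt_lim (D n) x (D (S n) x)) -> forall k n, Ck Om k (D n).
Proof.
  intros HD k. induction k as [|k IH]; intros n; [exact I|].
  exists (D (S n)). split; auto.
Qed.

Lemma smoothRR_iff f : smoothRR f <-> smooth_in univR f.
Proof.
  split.
  - intros [D [H0 HD]] k. subst f. apply tower_Ck. intros; auto.
  - intros H. exists (fun n => iter_der n f). split; [reflexivity|].
    intros n x. apply (smooth_in_tower univR f univR_open H n x I).
Qed.

Lemma smooth_on_iff a b f : smooth_on a b f <-> smooth_in (fun x => a < x < b) f.
Proof.
  split.
  - intros [D [H0 HD]] k. apply Ck_ext with (D O); [apply interval_open | auto |].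
    apply tower_Ck. auto.
  - intros H. exists (fun n => iter_der n f). split; [reflexivity|].
    intros n x Hx. apply (smooth_in_tower _ f (interval_open a b) H n x Hx).
Qed.

Definition cont_at (f : R -> R) (x : R) : Prop :=
  forall eps, 0 < eps -> exists d, 0 < d /\ forall y, Rabs (y - x) < d -> Rabs (f y - f x) < eps.

Lemma cont_at_iff f x : cont_at f x <-> continuity_pt f x.
Proof.
  split.
  - intros H eps Heps. destruct (H eps Heps) as [d [Hd Hb]]. exists d. split; auto.
    intros y [_ Hy]. apply Hb. exact Hy.
  - intros H eps Heps. destruct (H eps Heps) as [alp [Ha Hb]]. exists alp. split; auto.
    intros y Hy. destruct (Req_dec_T y x) as [->|n].
    + rewrite Rminus_diag, Rabs_R0; auto.
    + apply (Hb y). split; [split; [exact I | auto] | exact Hy].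
Qed.

Lemma smooth_in_cont_at Om f x : open_set Om -> smooth_in Om f -> Om x -> cont_at f x.
Proof.
  intros Ho Hf Hx. apply cont_at_iff, derivable_continuous_pt.
  exists (der f x). apply (proj1 (smooth_in_der Om f Ho Hf)); auto.
Qed.

Lemma cont_at_comp f g x : cont_at f x -> cont_at g (f x) -> cont_at (fun y => g (f y)) x.
Proof.
  intros Hf Hg. apply cont_at_iff.
  apply (continuity_pt_comp f g x); apply cont_at_iff; auto.
Qed.

Lemma cont_at_mult f g x : cont_at f x -> cont_at g x -> cont_at (fun y => f y * g y) x.
Proof.
  intros Hf Hg. apply cont_at_iff.
  apply (continuity_pt_mult f g x); apply cont_at_iff; auto.
Qed.

(** * A smooth step function *)

(** [psi k x = x^(-k) exp(-1/x)] for [x > 0] and [0] otherwise.  The family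
    is closed under differentiation, which makes every [psi k] smooth. *)
Definition psi (k : nat) (x : R) : R :=
  if Rle_dec x 0 then 0 else (/ x) ^ k * exp (- / x).

Lemma psi_nonpos k x : x <= 0 -> psi k x = 0.
Proof. intros H; unfold psi; destruct Rle_dec; lra. Qed.

Lemma psi_pos k x : 0 < x -> psi k x = (/ x) ^ k * exp (- / x).
Proof. intros H; unfold psi; destruct Rle_dec; [lra | auto]. Qed.

Lemma derivable_pt_lim_inv_id x : x <> 0 -> derivable_pt_lim (fun y => / y) x (- ((/ x) ^ 2)).
Proof.
  intros Hx.
  pose proof (derivable_pt_lim_div (fun _ => 1) id x 0 1
                (derivable_pt_lim_const 1 x) (derivable_pt_lim_id x) Hx) as H.
  unfold div_fct, id in H.
  replace (fun y => / y) with (fun y => 1 / y)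
    by (apply functional_extensionality; intro; unfold Rdiv; ring).
  replace (- ((/ x) ^ 2)) with ((0 * x - 1 * 1) / x²) by (unfold Rsqr; field; auto).
  exact H.
Qed.

Lemma exp_ge_pow y (m : nat) : 0 < y -> (0 < m)%nat -> (y / INR m) ^ m <= exp y.
Proof.
  intros Hy Hm. assert (HmR : 0 < INR m) by (apply lt_0_INR; auto).
  assert (Hq : 0 < y / INR m) by (apply Rdiv_lt_0_compat; auto).
  assert (Hexp : exp y = exp (y / INR m) ^ m).
  { rewrite <- Rpower_pow by apply exp_pos. unfold Rpower. rewrite ln_exp.
    f_equal. field. lra. }
  rewrite Hexp. apply pow_incr. split; [lra|].
  pose proof (exp_ineq1 (y / INR m) ltac:(lra)). lra.
Qed.

(** Hence [psi (S k) h <= C h] for [h > 0]: the flat behaviour at 0. *)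
Lemma psi_bound k h : 0 < h ->
  (/ h) ^ S k * exp (- / h) <= INR (S (S k)) ^ (S (S k)) * h.
Proof.
  intros Hh. set (y := / h). assert (Hy : 0 < y) by (apply Rinv_0_lt_compat; auto).
  set (m := S (S k)). assert (HmR : 0 < INR m) by (apply lt_0_INR; unfold m; lia).
  pose proof (exp_ge_pow y m Hy ltac:(unfold m; lia)) as He.
  assert (Hh' : h = / y) by (unfold y; rewrite Rinv_inv; auto). rewrite Hh', exp_Ropp.
  assert (HE : 0 < exp y) by apply exp_pos.
  unfold Rdiv in He. rewrite Rpow_mult_distr, pow_inv in He.
  assert (Hmm : 0 < INR m ^ m) by (apply pow_lt; auto).
  assert (Hym : y ^ m = y ^ S k * y) by (unfold m; simpl; ring).
  assert (Hyk : 0 < y ^ S k) by (apply pow_lt; auto).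
  apply Rmult_le_reg_r with (exp y * y); [nra|].
  replace (y ^ S k * / exp y * (exp y * y)) with (y ^ S k * y) by (field; lra).
  replace (INR m ^ m * / y * (exp y * y)) with (INR m ^ m * exp y) by (field; lra).
  rewrite <- Hym.
  apply Rmult_le_reg_r with (/ INR m ^ m); [apply Rinv_0_lt_compat; auto|].
  replace (INR m ^ m * exp y * / INR m ^ m) with (exp y) by (field; lra). lra.
Qed.

(** [psi k] is flat at 0: its difference quotients at 0 are [O(h)]. *)
Lemma psi_deriv_0 k : derivable_pt_lim (psi k) 0 0.
Proof.
  intros eps Heps. set (M := INR (S (S k)) ^ (S (S k))).
  assert (HM : 0 < M) by (apply pow_lt; apply lt_0_INR; lia).
  assert (Hd : 0 < eps / M) by (apply Rdiv_lt_0_compat; auto).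
  exists (mkposreal _ Hd). intros h Hh0 Hh. simpl in Hh.
  rewrite Rplus_0_l, (psi_nonpos k 0), !Rminus_0_r by lra.
  destruct (Rle_dec h 0) as [Hn|Hp].
  - rewrite psi_nonpos by auto. unfold Rdiv. rewrite Rmult_0_l, Rabs_R0. auto.
  - assert (Hp' : 0 < h) by lra. rewrite psi_pos by auto.
    replace ((/ h) ^ k * exp (- / h) / h) with ((/ h) ^ S k * exp (- / h))
      by (simpl; field; lra).
    assert (H0 : 0 < (/ h) ^ S k * exp (- / h)).
    { apply Rmult_lt_0_compat; [apply pow_lt, Rinv_0_lt_compat; auto | apply exp_pos]. }
    rewrite Rabs_right by lra. pose proof (psi_bound k h Hp') as Hb. fold M in Hb.
    apply Rabs_def2 in Hh. destruct Hh as [Hh1 Hh2].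
    apply Rle_lt_trans with (M * h); auto.
    apply Rmult_lt_reg_r with (/ M); [apply Rinv_0_lt_compat; auto|].
    replace (M * h * / M) with h by (field; lra). unfold Rdiv in Hh1. lra.
Qed.

Lemma psi_deriv k x :
  derivable_pt_lim (psi k) x (- INR k * psi (S k) x + psi (S (S k)) x).
Proof.
  destruct (Rtotal_order x 0) as [Hx|[Hx|Hx]].
  - rewrite !psi_nonpos by lra. replace (- INR k * 0 + 0) with 0 by ring.
    apply derivable_pt_lim_local with (fun _ => 0); [|apply derivable_pt_lim_const].
    exists (- x). split; [lra|]. intros y Hy. apply Rabs_def2 in Hy.
    rewrite psi_nonpos by lra. auto.
  - subst x. rewrite !psi_nonpos by lra. replace (- INR k * 0 + 0) with 0 by ring.
    apply psi_deriv_0.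
  - rewrite !psi_pos by auto.
    apply derivable_pt_lim_local with (fun y => (/ y) ^ k * exp (- / y)).
    + exists x. split; auto. intros y Hy. apply Rabs_def2 in Hy. rewrite psi_pos by lra. auto.
    + assert (Hx0 : x <> 0) by lra.
      pose proof (derivable_pt_lim_comp (fun y => / y) (fun z => z ^ k) x _ _
                    (derivable_pt_lim_inv_id x Hx0) (derivable_pt_lim_pow (/ x) k)) as H1.
      pose proof (derivable_pt_lim_opp _ _ _ (derivable_pt_lim_inv_id x Hx0)) as H2.
      pose proof (derivable_pt_lim_comp (opp_fct (fun y => / y)) exp x _ _
                    H2 (derivable_pt_lim_exp _)) as H3.
      pose proof (derivable_pt_lim_mult _ _ x _ _ H1 H3) as H4.
      unfold comp, mult_fct, opp_fct in H4.
      match goal with |- derivable_pt_lim _ _ ?l => replace l with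
        (INR k * (/ x) ^ Init.Nat.pred k * - (/ x) ^ 2 * exp (- / x) +
         (/ x) ^ k * (exp (- / x) * - - (/ x) ^ 2)) end.
      * exact H4.
      * destruct k; simpl; ring.
Qed.

Lemma psi_smooth k : smooth_in univR (psi k).
Proof.
  intro n. revert k. induction n as [|n IH]; intros k; [exact I|].
  exists (fun x => - INR k * psi (S k) x + psi (S (S k)) x). split.
  - intros x _. apply psi_deriv.
  - apply Ck_plus; [apply Ck_mult; [apply smooth_in_const | apply IH] | apply IH].
Qed.

Lemma psi0_pos x : 0 < x -> 0 < psi 0 x.
Proof. intros; rewrite psi_pos by auto. simpl. rewrite Rmult_1_l. apply exp_pos. Qed.

Lemma psi0_nonneg x : 0 <= psi 0 x.
Proof.
  destruct (Rle_dec x 0); [rewrite psi_nonpos; lra | apply Rlt_le, psi0_pos; lra].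
Qed.

Definition step (x : R) : R := psi 0 x * / (psi 0 x + psi 0 (1 - x)).

Lemma step_den_pos x : 0 < psi 0 x + psi 0 (1 - x).
Proof.
  destruct (Rle_dec x 0).
  - pose proof (psi0_pos (1 - x)). pose proof (psi0_nonneg x). lra.
  - pose proof (psi0_pos x). pose proof (psi0_nonneg (1 - x)). lra.
Qed.

Lemma step_smooth : smooth_in univR step.
Proof.
  unfold step. apply smooth_in_mult; [apply psi_smooth|].
  apply smooth_in_inv; [intros x _; pose proof (step_den_pos x); lra|].
  apply smooth_in_plus; [apply psi_smooth|].
  apply smooth_in_ext with (fun x => psi 0 ((-1) * x + 1));
    [apply univR_open | intros x _; f_equal; ring |].
  apply smooth_in_comp; [apply psi_smooth | apply smooth_in_affine].
Qed.

Lemma step_0 x : x <= 0 -> step x = 0.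
Proof. intros; unfold step; rewrite psi_nonpos by auto; ring. Qed.

Lemma step_1 x : 1 <= x -> step x = 1.
Proof.
  intros; unfold step. rewrite (psi_nonpos 0 (1 - x)), Rplus_0_r by lra.
  pose proof (psi0_pos x); field; lra.
Qed.

Lemma step_pos x : 0 < x -> 0 < step x.
Proof.
  intros; unfold step. pose proof (step_den_pos x). pose proof (psi0_pos x).
  apply Rmult_lt_0_compat; auto. apply Rinv_0_lt_compat; auto.
Qed.

Lemma step_range x : 0 <= step x <= 1.
Proof.
  unfold step. pose proof (step_den_pos x). pose proof (psi0_nonneg x).
  pose proof (psi0_nonneg (1 - x)). split.
  - apply Rmult_le_pos; auto. apply Rlt_le, Rinv_0_lt_compat; auto.
  - apply Rmult_le_reg_r with (psi 0 x + psi 0 (1 - x)); auto.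
    replace (psi 0 x * / (psi 0 x + psi 0 (1 - x)) * (psi 0 x + psi 0 (1 - x)))
      with (psi 0 x) by (field; lra). lra.
Qed.

Lemma step_lt1_inv x : step x < 1 -> x < 1.
Proof. intros H. destruct (Rle_dec 1 x); [rewrite step_1 in H; lra | lra]. Qed.

Definition ramp (a b z : R) : R := step ((z - a) * / (b - a)).

Lemma ramp_smooth a b : smoothRR (ramp a b).
Proof.
  apply smoothRR_iff. unfold ramp.
  apply smooth_in_ext with (fun z => step ((/ (b - a)) * z + (- a * / (b - a))));
    [apply univR_open | intros; f_equal; ring |].
  apply smooth_in_comp; [apply step_smooth | apply smooth_in_affine].
Qed.

Lemma ramp_0 a b z : a < b -> z <= a -> ramp a b z = 0.
Proof.
  intros. unfold ramp. apply step_0.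
  assert (0 < / (b - a)) by (apply Rinv_0_lt_compat; lra). nra.
Qed.

Lemma ramp_1 a b z : a < b -> b <= z -> ramp a b z = 1.
Proof.
  intros. unfold ramp. apply step_1.
  apply Rmult_le_reg_r with (b - a); [lra|]. rewrite Rmult_assoc, Rinv_l by lra. lra.
Qed.

Lemma ramp_pos_inv a b z : a < b -> 0 < ramp a b z -> a < z.
Proof. intros H1 H2. destruct (Rle_dec z a); [rewrite ramp_0 in H2; auto; lra | lra]. Qed.

Lemma ramp_lt1_inv a b z : a < b -> ramp a b z < 1 -> z < b.
Proof. intros H1 H2. destruct (Rle_dec b z); [rewrite ramp_1 in H2; auto; lra | lra]. Qed.

Lemma ramp_range a b z : 0 <= ramp a b z <= 1.
Proof. apply step_range. Qed.

(** The three rescaled steps of the construction: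
    [lam] (1 from 1/2 on) turns a distance function into one that is 1 near the
    "far" region, [rho] (0 below 1/4, 1 above 1/2) compares two such values, and
    [xi] (0 below 1/3, 1 above 2/3) reparametrises time so it is flat near 0 and 1. *)
Definition lam (s : R) : R := step (2 * s).
Definition rho (q : R) : R := step (4 * q - 1).
Definition xi (s : R) : R := step (3 * s - 1).

Lemma step_affine_smooth a b : smooth_in univR (fun s => step (a * s + b)).
Proof. apply smooth_in_comp; [apply step_smooth | apply smooth_in_affine]. Qed.

Lemma lam_smooth : smooth_in univR lam.
Proof.
  apply smooth_in_ext with (fun s => step (2 * s + 0));
    [apply univR_open | intros; unfold lam; f_equal; ring | apply step_affine_smooth].
Qed.

Lemma rho_smooth : smooth_in univR rho.
Proof.
  apply smooth_in_ext with (fun s => step (4 * s + (-1)));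
    [apply univR_open | intros; unfold rho; f_equal; ring | apply step_affine_smooth].
Qed.

Lemma xi_smooth : smooth_in univR xi.
Proof.
  apply smooth_in_ext with (fun s => step (3 * s + (-1)));
    [apply univR_open | intros; unfold xi; f_equal; ring | apply step_affine_smooth].
Qed.

Lemma lam_pos s : 0 < s -> 0 < lam s.
Proof. intros; unfold lam; apply step_pos; lra. Qed.
Lemma lam_0 : lam 0 = 0.
Proof. unfold lam; apply step_0; lra. Qed.
Lemma lam_range s : 0 <= lam s <= 1.
Proof. apply step_range. Qed.
Lemma lam_lt1 s : lam s < 1 -> s < 1/2.
Proof. intros H; unfold lam in H; apply step_lt1_inv in H; lra. Qed.
Lemma rho_nonpos q : q <= 1/4 -> rho q = 0.
Proof. intros; unfold rho; apply step_0; lra. Qed.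
Lemma rho_1 q : 1/2 <= q -> rho q = 1.
Proof. intros; unfold rho; apply step_1; lra. Qed.
Lemma xi_0 : xi 0 = 0.
Proof. unfold xi; apply step_0; lra. Qed.
Lemma xi_1 : xi 1 = 1.
Proof. unfold xi; apply step_1; lra. Qed.

(** * Structure curves and functions of the interval spaces and of products *)

Lemma Ityp_eq (s t : Ityp) : proj1_sig s = proj1_sig t -> s = t.
Proof.
  destruct s as [s Hs], t as [t Ht]. simpl. intros ->. f_equal. apply proof_irrelevance.
Qed.

Lemma prod01 a b : 0 <= a <= 1 -> 0 <= b <= 1 -> 0 <= a * b <= 1.
Proof. intros. split; [apply Rmult_le_pos; lra | nra]. Qed.

Lemma Iunit_fun G : smoothRR G -> funs Iunit (fun p : Ityp => G (proj1_sig p)).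
Proof.
  intros HG c Hc.
  assert (Hcoord : smoothRR (fun s => proj1_sig (c s))).
  { apply (Hc (fun y : Ityp => proj1_sig y)). exists (fun x => x). split; [|reflexivity].
    intros c' Hc'. apply (Hc' (fun x => x)). reflexivity. }
  apply smoothRR_iff. apply smoothRR_iff in HG. apply smoothRR_iff in Hcoord.
  apply (smooth_in_comp univR G _ HG Hcoord).
Qed.

Lemma Iunit_curve (w : R -> Ityp) : smoothRR (fun r => proj1_sig (w r)) -> curves Iunit w.
Proof.
  intros Hw g [f [Hf ->]]. apply Hf. intros g' Hg'. rewrite Hg'. exact Hw.
Qed.

Definition flat_ends (G : R -> R) : Prop :=
  smoothRR G /\ exists e, 0 < e < 1/4 /\
    (forall z, 0 <= z < e -> G z = G 0) /\ (forall z, 1 - e < z <= 1 -> G z = G 1).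

Lemma flat_ends_gen G : flat_ends G ->
  funs Iunit (fun p : Ityp => G (proj1_sig p)) /\
  exists eps, 0 < eps < 1/4 /\
    (forall s t : Ityp, proj1_sig s < eps -> proj1_sig t < eps -> G (proj1_sig s) = G (proj1_sig t)) /\
    (forall s t : Ityp, 1 - eps < proj1_sig s -> 1 - eps < proj1_sig t ->
       G (proj1_sig s) = G (proj1_sig t)).
Proof.
  intros [HG [e [He [H0 H1]]]]. split; [apply Iunit_fun; auto|].
  exists e. split; auto. split.
  - intros [s Hs] [t Ht] Hs' Ht'; simpl in *. rewrite (H0 s), (H0 t); auto; lra.
  - intros [s Hs] [t Ht] Hs' Ht'; simpl in *. rewrite (H1 s), (H1 t); auto; lra.
Qed.

Lemma curve_BoldI_flat (t : R -> Ityp) G : curves BoldI t -> flat_ends G ->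
  smoothRR (fun r => G (proj1_sig (t r))).
Proof. intros Ht HG. exact (Ht _ (flat_ends_gen G HG)). Qed.

Lemma xi_flat_ends : flat_ends xi.
Proof.
  split; [apply smoothRR_iff, xi_smooth|]. exists (1/8). split; [lra|].
  unfold xi. split; intros z Hz; [rewrite !step_0 | rewrite !step_1]; lra.
Qed.

Lemma ramp_flat_ends a b : 0 < a -> a < b -> b < 1 -> flat_ends (ramp a b).
Proof.
  intros. split; [apply ramp_smooth|].
  exists (Rmin (Rmin a (1 - b)) (1/8)).
  pose proof (Rmin_l (Rmin a (1 - b)) (1/8)). pose proof (Rmin_r (Rmin a (1 - b)) (1/8)).
  pose proof (Rmin_l a (1 - b)). pose proof (Rmin_r a (1 - b)).
  split; [split; [repeat apply Rmin_pos; lra | lra]|].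
  split; intros z Hz; [rewrite !ramp_0 | rewrite !ramp_1]; auto; lra.
Qed.

Definition Uf {X : Frol} (u : X -> BoldI) (x : X) : R := proj1_sig (u x).

Lemma Uf_range {X : Frol} (u : X -> BoldI) x : 0 <= Uf u x <= 1.
Proof. unfold Uf. destruct (u x); simpl; auto. Qed.

Lemma smooth_map_BoldI_flat (X : Frol) (u : X -> BoldI) (c : R -> X) G :
  smooth_map X BoldI u -> curves X c -> flat_ends G -> smoothRR (fun r => G (Uf u (c r))).
Proof.
  intros Hu Hc HG.
  pose proof (Hu _ (fun c' Hc' => Hc' _ (flat_ends_gen G HG))) as H.
  exact (proj1 (funs_spec X _) H c Hc).
Qed.

(** Although [u] is only smooth into [BoldI] (whose structure ignores what
    happens near 0 and 1), [u] along a curve is still continuous: the ramps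
    between interior levels detect its value. *)
Lemma Uf_cont (X : Frol) (u : X -> BoldI) (c : R -> X) r0 :
  smooth_map X BoldI u -> curves X c -> cont_at (fun r => Uf u (c r)) r0.
Proof.
  intros Hu Hc eps Heps. set (w0 := Uf u (c r0)). pose proof (Uf_range u (c r0)) as Hw0.
  fold w0 in Hw0.
  assert (Hlow : exists d, 0 < d /\ forall r, Rabs (r - r0) < d -> w0 - eps < Uf u (c r)).
  { destruct (Rle_dec (w0 - eps/2) 0) as [Hle|Hgt].
    - exists 1. split; [lra|]. intros r _. pose proof (Uf_range u (c r)). lra.
    - set (a := w0 - eps/2). set (b := w0 - eps/4).
      assert (HG : flat_ends (ramp a b)) by (apply ramp_flat_ends; unfold a, b in *; lra).
      pose proof (smooth_map_BoldI_flat X u c _ Hu Hc HG) as Hs. apply smoothRR_iff in Hs.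
      destruct (smooth_in_cont_at univR _ r0 univR_open Hs I (1/2) ltac:(lra)) as [d [Hd Hb]].
      exists d. split; auto. intros r Hr. specialize (Hb r Hr). simpl in Hb.
      fold w0 in Hb. rewrite (ramp_1 a b w0) in Hb by (unfold a, b; lra).
      apply Rabs_def2 in Hb. assert (0 < ramp a b (Uf u (c r))) by lra.
      apply ramp_pos_inv in H; unfold a, b in *; lra. }
  assert (Hup : exists d, 0 < d /\ forall r, Rabs (r - r0) < d -> Uf u (c r) < w0 + eps).
  { destruct (Rle_dec 1 (w0 + eps/2)) as [Hle|Hgt].
    - exists 1. split; [lra|]. intros r _. pose proof (Uf_range u (c r)). lra.
    - set (a := w0 + eps/4). set (b := w0 + eps/2).
      assert (HG : flat_ends (ramp a b)) by (apply ramp_flat_ends; unfold a, b in *; lra).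
      pose proof (smooth_map_BoldI_flat X u c _ Hu Hc HG) as Hs. apply smoothRR_iff in Hs.
      destruct (smooth_in_cont_at univR _ r0 univR_open Hs I (1/2) ltac:(lra)) as [d [Hd Hb]].
      exists d. split; auto. intros r Hr. specialize (Hb r Hr). simpl in Hb.
      fold w0 in Hb. rewrite (ramp_0 a b w0) in Hb by (unfold a, b; lra).
      apply Rabs_def2 in Hb. assert (ramp a b (Uf u (c r)) < 1) by lra.
      apply ramp_lt1_inv in H; unfold a, b in *; lra. }
  destruct Hlow as [d1 [Hd1 H1]]. destruct Hup as [d2 [Hd2 H2]].
  exists (Rmin d1 d2). split; [apply Rmin_pos; auto|].
  intros r Hr. apply ball_Rmin in Hr. destruct Hr as [Hr1 Hr2].
  specialize (H1 r Hr1). specialize (H2 r Hr2). fold w0. apply Rabs_def1; lra.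
Qed.

Lemma lam_Uf_cont (X : Frol) (u : X -> BoldI) (c : R -> X) r0 :
  smooth_map X BoldI u -> curves X c -> cont_at (fun r => lam (Uf u (c r))) r0.
Proof.
  intros Hu Hc. apply cont_at_comp with (f := fun r => Uf u (c r)) (g := lam).
  - apply Uf_cont; auto.
  - apply (smooth_in_cont_at univR); [apply univR_open | apply lam_smooth | exact I].
Qed.

(** Where [u] is positive along a curve, [lam o u] is locally a smooth function
    (with values in [[0,1]]): near such a point [lam] agrees with the flat-ended
    [lam * ramp], which [BoldI] sees. *)
Lemma lam_Uf_local_smooth (X : Frol) (u : X -> BoldI) (c : R -> X) r0 :
  smooth_map X BoldI u -> curves X c -> 0 < Uf u (c r0) ->
  exists d F, 0 < d /\ smoothRR F /\ (forall r, 0 <= F r <= 1) /\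
    forall r, Rabs (r - r0) < d -> F r = lam (Uf u (c r)).
Proof.
  intros Hu Hc Hw. set (w0 := Uf u (c r0)) in *.
  pose proof (Uf_range u (c r0)) as Hw0. fold w0 in Hw0.
  set (G := fun z => lam z * ramp (w0/4) (w0/2) z).
  assert (HG : flat_ends G).
  { split.
    - apply smoothRR_iff. apply smooth_in_mult; [apply lam_smooth | apply smoothRR_iff, ramp_smooth].
    - exists (Rmin (w0/4) (1/8)).
      pose proof (Rmin_l (w0/4) (1/8)). pose proof (Rmin_r (w0/4) (1/8)).
      split; [split; [apply Rmin_pos; lra | lra]|]. unfold G, lam. split; intros z Hz.
      + rewrite !(ramp_0 (w0/4) (w0/2)); lra.
      + rewrite !(ramp_1 (w0/4) (w0/2)), !step_1 by lra. auto. }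
  destruct (Uf_cont X u c r0 Hu Hc (w0/2) ltac:(lra)) as [d [Hd Hb]].
  exists d, (fun r => G (Uf u (c r))). split; [auto|]. split.
  - apply smooth_map_BoldI_flat; auto.
  - split.
    + intros r. unfold G. apply prod01; [apply lam_range | apply ramp_range].
    + intros r Hr. specialize (Hb r Hr). fold w0 in Hb. apply Rabs_def2 in Hb. unfold G.
      rewrite ramp_1 by lra. ring.
Qed.

Lemma prod_curve_fst (X Y : Frol) (c : R -> prodF X Y) :
  curves (prodF X Y) c -> curves X (fun r => fst (c r)).
Proof.
  intros Hc. apply (proj2 (curves_spec X _)). intros f Hf.
  exact (Hc _ (or_introl (ex_intro _ f (conj Hf eq_refl)))).
Qed.

Lemma prod_curve_snd (X Y : Frol) (c : R -> prodF X Y) :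
  curves (prodF X Y) c -> curves Y (fun r => snd (c r)).
Proof.
  intros Hc. apply (proj2 (curves_spec Y _)). intros f Hf.
  exact (Hc _ (or_intror (ex_intro _ f (conj Hf eq_refl)))).
Qed.

Lemma prod_curve_pair (X Y : Frol) (x : R -> X) (y : R -> Y) :
  curves X x -> curves Y y -> curves (prodF X Y) (fun r => (x r, y r)).
Proof.
  intros Hx Hy g [[f [Hf ->]]|[f [Hf ->]]]; simpl.
  - apply (proj1 (curves_spec X x) Hx f Hf).
  - apply (proj1 (curves_spec Y y) Hy f Hf).
Qed.

(** * Smoothness of the time reparametrisation *)

Lemma not_Lambda_near (Z : Frol) (P : Z -> Prop) (x : R -> Z) r0 :
  P (x r0) -> ~ Lambda Z P x r0 -> exists d, 0 < d /\ forall r, Rabs (r - r0) < d -> P (x r).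
Proof.
  intros HP HL. apply NNPP. intros Hn. apply HL. split; auto.
  assert (Hall : forall n : nat, exists r, Rabs (r - r0) < / (INR n + 1) /\ ~ P (x r)).
  { intros n. apply NNPP. intros Hn2. apply Hn. exists (/ (INR n + 1)). split.
    - apply Rinv_0_lt_compat. pose proof (pos_INR n). lra.
    - intros r Hr. apply NNPP. intros Hr2. apply Hn2. exists r. auto. }
  set (sn := fun n => proj1_sig (constructive_indefinite_description _ (Hall n))).
  assert (Hsn : forall n, Rabs (sn n - r0) < / (INR n + 1) /\ ~ P (x (sn n)))
    by (intros n; exact (proj2_sig (constructive_indefinite_description _ (Hall n)))).
  exists sn. split; [intros n; apply Hsn|].
  intros eps Heps. destruct (INR_unbounded (/ eps)) as [N HN]. exists N. intros n HnN.
  unfold Rdist. apply Rlt_le_trans with (/ (INR n + 1)); [apply Hsn|].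
  assert (INR N <= INR n) by (apply le_INR; exact HnN).
  assert (0 < / eps) by (apply Rinv_0_lt_compat; lra).
  rewrite <- (Rinv_inv eps). apply Rinv_le_contravar; lra.
Qed.

Lemma Lambda_far_from_const (Z : Frol) (P : Z -> Prop) (c : R -> Z) r0 d : 0 < d ->
  ((forall r, Rabs (r - r0) < d -> P (c r)) \/ (forall r, Rabs (r - r0) < d -> ~ P (c r))) ->
  forall s, Lambda Z P c s -> Rabs (s - r0) > d / 2.
Proof.
  intros Hd Hconst s [Hs [sn [Hsn Hcv]]].
  destruct (Rle_dec (Rabs (s - r0)) (d/2)) as [Hle|]; [exfalso | lra].
  destruct Hconst as [H|H].
  - destruct (Hcv (d/2) ltac:(lra)) as [N HN]. specialize (HN N (le_n N)). unfold Rdist in HN.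
    apply (Hsn N), H.
    replace (sn N - r0) with ((sn N - s) + (s - r0)) by ring.
    pose proof (Rabs_triang (sn N - s) (s - r0)). lra.
  - apply (H s); [lra | auto].
Qed.

(** This is what both a [BoldI]-curve and an FCIP time parameter
    (w.r.t. [Z = c^-1(P)]) provide once composed with [xi]. *)
Definition smooth_where_const (Z : R -> Prop) (g : R -> R) : Prop :=
  forall r1 d, 0 < d ->
    ((forall r, Rabs (r - r1) < d -> Z r) \/ (forall r, Rabs (r - r1) < d -> ~ Z r)) ->
    exists d', 0 < d' /\ smooth_in (ball r1 d') g.

Lemma BoldI_curve_smooth_where_const (t : R -> Ityp) (Z : R -> Prop) :
  curves BoldI t -> smooth_where_const Z (fun r => xi (proj1_sig (t r))).
Proof.
  intros Ht r1 d Hd _. exists 1. split; [lra|].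
  apply smooth_in_sub with univR; [intros; exact I|].
  apply smoothRR_iff, curve_BoldI_flat; [auto | apply xi_flat_ends].
Qed.

Lemma FCIP_time_smooth_where_const (Z : Frol) (P : Z -> Prop) (c : R -> Z) (t : R -> Ityp) :
  (forall eps, eps > 0 -> forall a b, a < b ->
     (forall r, a < r < b -> forall s, Lambda Z P c s -> ~ (s - eps <= r <= s + eps)) ->
     smooth_on a b (fun r => proj1_sig (t r))) ->
  smooth_where_const (fun r => P (c r)) (fun r => xi (proj1_sig (t r))).
Proof.
  intros Ht r1 d Hd Hc. pose proof (Lambda_far_from_const Z P c r1 d Hd Hc) as Hfar.
  exists (d/4). split; [lra|]. apply smooth_in_comp; [apply xi_smooth|].
  apply (smooth_in_sub (fun x => r1 - d/4 < x < r1 + d/4)).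
  { intros y Hy. unfold ball in Hy. apply Rabs_def2 in Hy. lra. }
  apply smooth_on_iff, (Ht (d/4) ltac:(lra)); [lra|].
  intros r Hr s Hs Hin. specialize (Hfar s Hs).
  unfold Rabs in Hfar; destruct Rcase_abs in Hfar; lra.
Qed.

(** * The deformation of one factor *)

(** The first factor is deformed at speed [gate u1 u2 x y]: it is 1 when [x] is
    in [A] (harmless, [h1] fixes [A]) or when [lam (u2 y) >= lam (u1 x) / 2],
    and 0 when [lam (u2 y) <= lam (u1 x) / 4], in particular when [y] is in [B];
    hence [X * B] is not moved. *)
Definition gate {X Y : Frol} (u1 : X -> BoldI) (u2 : Y -> BoldI) (x : X) (y : Y) : R :=
  if Req_dec_T (Uf u1 x) 0 then 1 else rho (lam (Uf u2 y) * / lam (Uf u1 x)).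

Lemma gate_range {X Y : Frol} (u1 : X -> BoldI) (u2 : Y -> BoldI) x y :
  0 <= gate u1 u2 x y <= 1.
Proof. unfold gate. destruct Req_dec_T; [lra | apply step_range]. Qed.

Lemma gate_in_A {X Y : Frol} (u1 : X -> BoldI) (u2 : Y -> BoldI) x y :
  Uf u1 x = 0 -> gate u1 u2 x y = 1.
Proof. intros H. unfold gate. destruct Req_dec_T; [auto | contradiction]. Qed.

Lemma gate_in_B {X Y : Frol} (u1 : X -> BoldI) (u2 : Y -> BoldI) x y :
  Uf u1 x <> 0 -> Uf u2 y = 0 -> gate u1 u2 x y = 0.
Proof.
  intros H1 H2. unfold gate. destruct Req_dec_T; [contradiction|].
  rewrite H2, lam_0, Rmult_0_l. apply rho_nonpos; lra.
Qed.

Definition alphaI {X Y : Frol} (u1 : X -> BoldI) (u2 : Y -> BoldI) (t : Ityp) (x : X) (y : Y)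
  : Ityp :=
  exist _ (xi (proj1_sig t) * gate u1 u2 x y) (prod01 _ _ (step_range _) (gate_range u1 u2 x y)).

Section GatedTime.

Variables (X Y : Frol) (A : X -> Prop) (B : Y -> Prop) (u1 : X -> BoldI) (u2 : Y -> BoldI).
Hypothesis Hu1 : smooth_map X BoldI u1.
Hypothesis HA : forall p, Uf u1 p = 0 <-> A p.
Hypothesis Hu2 : smooth_map Y BoldI u2.
Hypothesis HB : forall q, Uf u2 q = 0 <-> B q.

Variables (x : R -> X) (y : R -> Y) (T : R -> R) (Z : R -> Prop).
Hypothesis Hx : curves X x.
Hypothesis Hy : curves Y y.
Hypothesis HZ : forall r, Z r <-> A (x r) \/ B (y r).
Hypothesis HT : smooth_where_const Z (fun r => xi (T r)).

Let gated (r : R) : R := xi (T r) * gate u1 u2 (x r) (y r).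

(** Inside [A] (away from [Lambda]) the gate is 1 and [Z] holds nearby. *)
Lemma gated_smooth_in_A r0 : Uf u1 (x r0) = 0 -> ~ Lambda X A x r0 ->
  exists d, 0 < d /\ smooth_in (ball r0 d) gated.
Proof.
  intros Ha0 HnL.
  destruct (not_Lambda_near X A x r0 (proj1 (HA _) Ha0) HnL) as [d1 [Hd1 Hnear]].
  destruct (HT r0 d1 Hd1) as [d' [Hd' Hs]].
  { left. intros r Hr. apply HZ. left. auto. }
  exists (Rmin d1 d'). split; [apply Rmin_pos; auto|].
  apply smooth_in_ext with (fun r => xi (T r)); [apply ball_open| |].
  - intros r Hr. unfold ball in Hr. apply ball_Rmin in Hr. unfold gated.
    rewrite gate_in_A; [ring | apply HA, Hnear; tauto].
  - apply smooth_in_sub with (ball r0 d'); auto.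
    intros r Hr. unfold ball in *. apply ball_Rmin in Hr. tauto.
Qed.

(** Where [u1 > 0] and [u2 = 0], the gate vanishes identically nearby. *)
Lemma gated_smooth_in_B r0 : 0 < Uf u1 (x r0) -> Uf u2 (y r0) = 0 ->
  exists d, 0 < d /\ smooth_in (ball r0 d) gated.
Proof.
  intros Ha0 Hb0. set (a0 := Uf u1 (x r0)) in *.
  pose proof (lam_pos a0 Ha0) as Hla0.
  destruct (Uf_cont X u1 x r0 Hu1 Hx a0 Ha0) as [d3 [Hd3 H3]].
  destruct (lam_Uf_cont X u1 x r0 Hu1 Hx (lam a0 / 2) ltac:(lra)) as [d1 [Hd1 H1]].
  destruct (lam_Uf_cont Y u2 y r0 Hu2 Hy (lam a0 / 8) ltac:(lra)) as [d2 [Hd2 H2]].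
  exists (Rmin d1 (Rmin d2 d3)). split; [repeat apply Rmin_pos; auto|].
  apply smooth_in_ext with (fun _ => 0); [apply ball_open | | apply smooth_in_const].
  intros r Hr. unfold ball in Hr. apply ball_Rmin in Hr. destruct Hr as [Hr1 Hr].
  apply ball_Rmin in Hr. destruct Hr as [Hr2 Hr3].
  specialize (H1 r Hr1). specialize (H2 r Hr2). specialize (H3 r Hr3). simpl in *.
  rewrite Hb0, lam_0, Rminus_0_r in H2. fold a0 in H1, H3.
  apply Rabs_def2 in H1. apply Rabs_def2 in H3.
  pose proof (lam_range (Uf u2 (y r))). rewrite Rabs_right in H2 by lra.
  set (la := lam (Uf u1 (x r))) in *. set (lb := lam (Uf u2 (y r))) in *.
  unfold gated, gate. destruct Req_dec_T as [e|n]; [lra|]. fold la lb.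
  rewrite rho_nonpos; [ring|].
  apply Rmult_le_reg_r with la; [lra|]. rewrite Rmult_assoc, Rinv_l by lra. lra.
Qed.

(** Where both [u1] and [u2] are positive, [Z] fails nearby, so [xi o T] is
    smooth there, and the gate is [rho] of a quotient of smooth functions. *)
Lemma gated_smooth_off_AB r0 : 0 < Uf u1 (x r0) -> 0 < Uf u2 (y r0) ->
  exists d, 0 < d /\ smooth_in (ball r0 d) gated.
Proof.
  intros Ha0 Hb0. set (a0 := Uf u1 (x r0)) in *. set (b0 := Uf u2 (y r0)) in *.
  pose proof (lam_pos a0 Ha0) as Hla0.
  destruct (Uf_cont X u1 x r0 Hu1 Hx a0 Ha0) as [d3 [Hd3 H3]].
  destruct (Uf_cont Y u2 y r0 Hu2 Hy b0 Hb0) as [d4 [Hd4 H4]].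
  destruct (lam_Uf_local_smooth X u1 x r0 Hu1 Hx Ha0) as [d1 [F1 [Hd1 [HF1s [_ HF1e]]]]].
  destruct (lam_Uf_local_smooth Y u2 y r0 Hu2 Hy Hb0) as [d2 [F2 [Hd2 [HF2s [_ HF2e]]]]].
  destruct (HT r0 (Rmin d3 d4) (Rmin_pos _ _ Hd3 Hd4)) as [d5 [Hd5 H5]].
  { right. intros r Hr. apply ball_Rmin in Hr. destruct Hr as [Hr3 Hr4].
    specialize (H3 r Hr3). specialize (H4 r Hr4). apply Rabs_def2 in H3. apply Rabs_def2 in H4.
    intros HZr. apply HZ in HZr. fold a0 in H3. fold b0 in H4.
    destruct HZr as [HAr|HBr]; [apply HA in HAr | apply HB in HBr]; lra. }
  apply smoothRR_iff in HF1s. apply smoothRR_iff in HF2s.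
  assert (HF1r0 : F1 r0 = lam a0) by (apply HF1e; rewrite Rminus_diag, Rabs_R0; auto).
  destruct (smooth_in_cont_at univR F1 r0 univR_open HF1s I (lam a0 / 2) ltac:(lra))
    as [d6 [Hd6 H6]].
  set (D := Rmin (Rmin d1 d2) (Rmin (Rmin d3 d4) (Rmin d5 d6))).
  assert (HD : 0 < D) by (unfold D; repeat apply Rmin_pos; auto).
  assert (HDb : forall r, Rabs (r - r0) < D -> Rabs (r - r0) < d1 /\ Rabs (r - r0) < d2 /\
             Rabs (r - r0) < d3 /\ Rabs (r - r0) < d4 /\ Rabs (r - r0) < d5 /\ Rabs (r - r0) < d6).
  { intros r Hr. unfold D in Hr. apply ball_Rmin in Hr. destruct Hr as [Ha Hb].
    apply ball_Rmin in Ha. apply ball_Rmin in Hb. destruct Hb as [Hb Hc].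
    apply ball_Rmin in Hb. apply ball_Rmin in Hc. tauto. }
  exists D. split; auto.
  apply smooth_in_ext with (fun r => xi (T r) * rho (F2 r * / F1 r)); [apply ball_open| |].
  - intros r Hr. unfold ball in Hr. destruct (HDb r Hr) as [Hr1 [Hr2 [Hr3 _]]].
    specialize (H3 r Hr3). apply Rabs_def2 in H3. fold a0 in H3.
    unfold gated, gate. destruct Req_dec_T as [e|n]; [lra|].
    rewrite (HF1e r Hr1), (HF2e r Hr2). auto.
  - apply smooth_in_mult.
    + apply smooth_in_sub with (ball r0 d5); auto.
      intros r Hr; unfold ball in *. apply HDb in Hr; tauto.
    + apply smooth_in_comp; [apply rho_smooth|]. apply smooth_in_mult.
      * apply smooth_in_sub with univR; auto. intros; exact I.
      * apply smooth_in_inv; [|apply smooth_in_sub with univR; auto; intros; exact I].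
        intros r Hr. unfold ball in Hr. destruct (HDb r Hr) as [_ [_ [_ [_ [_ Hr6]]]]].
        specialize (H6 r Hr6). rewrite HF1r0 in H6. apply Rabs_def2 in H6. lra.
Qed.

Lemma gated_smooth_off_Lambda r0 : ~ Lambda X A x r0 ->
  exists d, 0 < d /\ smooth_in (ball r0 d) gated.
Proof.
  intros HnL. pose proof (Uf_range u1 (x r0)). pose proof (Uf_range u2 (y r0)).
  destruct (Req_dec_T (Uf u1 (x r0)) 0) as [Ha0|Ha0].
  - apply gated_smooth_in_A; auto.
  - destruct (Req_dec_T (Uf u2 (y r0)) 0) as [Hb0|Hb0].
    + apply gated_smooth_in_B; auto; lra.
    + apply gated_smooth_off_AB; lra.
Qed.

End GatedTime.

(** Consequently [h1] along the gated time and a structure curve [x] gives a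
    structure curve: this is exactly the FCIP of [h1]. *)
Lemma gated_h_curve (X Y : Frol) (A : X -> Prop) (B : Y -> Prop)
  (u1 : X -> BoldI) (u2 : Y -> BoldI) (h1 : prodF BoldI X -> X)
  (x : R -> X) (y : R -> Y) (t : R -> Ityp) (Z : R -> Prop) :
  FCIP_map X A X h1 ->
  smooth_map X BoldI u1 -> (forall p, Uf u1 p = 0 <-> A p) ->
  smooth_map Y BoldI u2 -> (forall q, Uf u2 q = 0 <-> B q) ->
  curves X x -> curves Y y ->
  (forall r, Z r <-> A (x r) \/ B (y r)) ->
  smooth_where_const Z (fun r => xi (proj1_sig (t r))) ->
  curves X (fun r => h1 (alphaI u1 u2 (t r) (x r) (y r), x r)).
Proof.
  intros Hh Hu1 HA Hu2 HB Hx Hy HZ HT. apply (proj2 (curves_spec X _)). intros f Hf.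
  apply (Hh f Hf (fun r => alphaI u1 u2 (t r) (x r) (y r)) x Hx).
  intros eps Heps a b Hab Hl. apply smooth_on_iff. simpl.
  apply smooth_in_local; [apply interval_open|]. intros r1 Hr1.
  apply (gated_smooth_off_Lambda X Y A B u1 u2 Hu1 HA Hu2 HB x y _ Z Hx Hy HZ HT).
  intros HL. apply (Hl r1 Hr1 r1 HL). lra.
Qed.

(** * The product construction *)

Lemma rho_ratio_cases la lb : 0 < la -> 0 < lb ->
  rho (lb * / la) = 1 \/ (rho (la * / lb) = 1 /\ lb < la / 2).
Proof.
  intros Ha Hb. destruct (Rle_dec (1/2) (lb * / la)) as [Hq|Hq]; [left; apply rho_1; auto|].
  assert (Hlt : lb < la / 2).
  { apply Rnot_le_lt in Hq. apply Rmult_lt_compat_r with (r := la) in Hq; auto.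
    rewrite Rmult_assoc, Rinv_l in Hq by lra. lra. }
  right. split; auto. apply rho_1.
  apply Rmult_le_reg_r with lb; auto. rewrite Rmult_assoc, Rinv_l by lra. lra.
Qed.

Lemma gate_cases {X Y : Frol} (u1 : X -> BoldI) (u2 : Y -> BoldI) x y :
  0 < Uf u1 x -> 0 < Uf u2 y ->
  gate u1 u2 x y = 1 \/ (gate u2 u1 y x = 1 /\ lam (Uf u2 y) < lam (Uf u1 x) / 2).
Proof.
  intros Ha Hb. unfold gate.
  destruct (Req_dec_T (Uf u1 x) 0); [lra|]. destruct (Req_dec_T (Uf u2 y) 0); [lra|].
  apply rho_ratio_cases; apply lam_pos; auto.
Qed.

Definition uprodI {X Y : Frol} (u1 : X -> BoldI) (u2 : Y -> BoldI) (p : prodF X Y) : BoldI :=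
  exist _ (lam (Uf u1 (fst p)) * lam (Uf u2 (snd p))) (prod01 _ _ (lam_range _) (lam_range _)).

Definition Hprod {X Y : Frol} (u1 : X -> BoldI) (u2 : Y -> BoldI)
  (h1 : prodF BoldI X -> X) (h2 : prodF BoldI Y -> Y) (p : prodF BoldI (prodF X Y)) : prodF X Y :=
  (h1 (alphaI u1 u2 (fst p) (fst (snd p)) (snd (snd p)), fst (snd p)),
   h2 (alphaI u2 u1 (fst p) (snd (snd p)) (fst (snd p)), snd (snd p))).

Section Product.

Variables (X Y : Frol) (A : X -> Prop) (B : Y -> Prop).
Variables (u1 : X -> BoldI) (h1 : prodF BoldI X -> X) (u2 : Y -> BoldI) (h2 : prodF BoldI Y -> Y).
Hypothesis Hu1 : smooth_map X BoldI u1.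
Hypothesis HA : forall p, Uf u1 p = 0 <-> A p.
Hypothesis Hh1_fcip : FCIP_map X A X h1.
Hypothesis Hh1_start : forall (t : Ityp) x, proj1_sig t = 0 -> h1 (t, x) = x.
Hypothesis Hh1_rel : forall (t : Ityp) a, A a -> h1 (t, a) = a.
Hypothesis Hh1_end : forall (t : Ityp) x, proj1_sig t = 1 -> proj1_sig (u1 x) < 1 -> A (h1 (t, x)).
Hypothesis Hu2 : smooth_map Y BoldI u2.
Hypothesis HB : forall q, Uf u2 q = 0 <-> B q.
Hypothesis Hh2_fcip : FCIP_map Y B Y h2.
Hypothesis Hh2_start : forall (t : Ityp) y, proj1_sig t = 0 -> h2 (t, y) = y.
Hypothesis Hh2_rel : forall (t : Ityp) b, B b -> h2 (t, b) = b.
Hypothesis Hh2_end : forall (t : Ityp) y, proj1_sig t = 1 -> proj1_sig (u2 y) < 1 -> B (h2 (t, y)).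

Let P (p : prodF X Y) : Prop := B (snd p) \/ A (fst p).
Let u : prodF X Y -> BoldI := uprodI u1 u2.
Let H : prodF BoldI (prodF X Y) -> prodF X Y := Hprod u1 u2 h1 h2.

Lemma uprod_zero p : proj1_sig (u p) = 0 <-> P p.
Proof.
  destruct p as [x y]. unfold u, uprodI, P; simpl. split.
  - intros H0. pose proof (Uf_range u1 x). pose proof (Uf_range u2 y).
    apply Rmult_integral in H0. destruct H0 as [H0|H0]; [right; apply HA | left; apply HB].
    + destruct (Req_dec_T (Uf u1 x) 0); auto. assert (0 < lam (Uf u1 x)) by (apply lam_pos; lra). lra.
    + destruct (Req_dec_T (Uf u2 y) 0); auto. assert (0 < lam (Uf u2 y)) by (apply lam_pos; lra). lra.
  - intros [Hy|Hx]; [apply HB in Hy; rewrite Hy | apply HA in Hx; rewrite Hx]; rewrite lam_0; ring.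
Qed.

Lemma uprod_local_Iunit_curve (c : R -> prodF X Y) r0 : curves (prodF X Y) c ->
  0 < Uf u1 (fst (c r0)) -> 0 < Uf u2 (snd (c r0)) ->
  exists d w, 0 < d /\ curves Iunit w /\ forall r, Rabs (r - r0) < d -> w r = u (c r).
Proof.
  intros Hc Ha0 Hb0.
  pose proof (prod_curve_fst X Y c Hc) as Hx. pose proof (prod_curve_snd X Y c Hc) as Hy.
  destruct (lam_Uf_local_smooth X u1 _ r0 Hu1 Hx Ha0) as [d1 [F1 [Hd1 [HF1s [HF1r HF1e]]]]].
  destruct (lam_Uf_local_smooth Y u2 _ r0 Hu2 Hy Hb0) as [d2 [F2 [Hd2 [HF2s [HF2r HF2e]]]]].
  exists (Rmin d1 d2), (fun r => exist (fun z => 0 <= z <= 1) (F1 r * F2 r)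
                                   (prod01 _ _ (HF1r r) (HF2r r)) : Ityp).
  split; [apply Rmin_pos; auto|]. split.
  - apply Iunit_curve. simpl. apply smoothRR_iff.
    apply smooth_in_mult; apply smoothRR_iff; auto.
  - intros r Hr. apply ball_Rmin in Hr. apply Ityp_eq. simpl.
    rewrite (HF1e r (proj1 Hr)), (HF2e r (proj2 Hr)). auto.
Qed.

(** [u] is smooth into [BoldI]: a generator [f] is constant near 0, which
    covers the parameters where [u] is small, and elsewhere [u] is locally an
    [I]-curve. *)
Lemma uprod_smooth : smooth_map (prodF X Y) BoldI u.
Proof.
  intros g Hg c Hc. apply Hg. intros f [Hfi [e [He [Hf0 _]]]].
  pose proof (prod_curve_fst X Y c Hc) as Hx. pose proof (prod_curve_snd X Y c Hc) as Hy.
  apply smoothRR_iff, smooth_in_local; [apply univR_open|]. intros r0 _.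
  set (w := fun r => proj1_sig (u (c r))).
  assert (Hw : cont_at w r0)
    by (apply cont_at_mult; [apply (lam_Uf_cont X u1) | apply (lam_Uf_cont Y u2)]; auto).
  destruct (Rlt_dec (w r0) e) as [Hlt|Hge].
  - destruct (Hw (e - w r0) ltac:(lra)) as [d [Hd Hb]].
    exists d. split; auto.
    apply smooth_in_ext with (fun _ => f (u (c r0))); [apply ball_open | | apply smooth_in_const].
    intros r Hr. apply Hf0; [exact Hlt|].
    specialize (Hb r Hr). apply Rabs_def2 in Hb. fold (w r). lra.
  - assert (Hw0 : 0 < w r0) by lra. unfold w, u, uprodI in Hw0; simpl in Hw0.
    pose proof (lam_range (Uf u1 (fst (c r0)))). pose proof (lam_range (Uf u2 (snd (c r0)))).
    pose proof (Uf_range u1 (fst (c r0))). pose proof (Uf_range u2 (snd (c r0))).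
    assert (Ha0 : 0 < Uf u1 (fst (c r0))).
    { destruct (Req_dec_T (Uf u1 (fst (c r0))) 0) as [e0|]; [rewrite e0, lam_0 in Hw0|]; lra. }
    assert (Hb0 : 0 < Uf u2 (snd (c r0))).
    { destruct (Req_dec_T (Uf u2 (snd (c r0))) 0) as [e0|]; [rewrite e0, lam_0 in Hw0|]; lra. }
    destruct (uprod_local_Iunit_curve c r0 Hc Ha0 Hb0) as [d [wI [Hd [HwI Hloc]]]].
    exists d. split; auto.
    apply smooth_in_ext with (fun r => f (wI r)); [apply ball_open | |].
    + intros r Hr. rewrite Hloc; auto.
    + apply smooth_in_sub with univR; [intros; exact I|].
      apply smoothRR_iff. exact (proj1 (funs_spec Iunit f) Hfi wI HwI).
Qed.

Lemma Hprod_curve (t : R -> Ityp) (c : R -> prodF X Y) : curves (prodF X Y) c ->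
  smooth_where_const (fun r => P (c r)) (fun r => xi (proj1_sig (t r))) ->
  curves (prodF X Y) (fun r => H (t r, c r)).
Proof.
  intros Hc HT. pose proof (prod_curve_fst X Y c Hc) as Hx. pose proof (prod_curve_snd X Y c Hc) as Hy.
  apply (prod_curve_pair X Y (fun r => h1 (alphaI u1 u2 (t r) (fst (c r)) (snd (c r)), fst (c r)))
                             (fun r => h2 (alphaI u2 u1 (t r) (snd (c r)) (fst (c r)), snd (c r)))).
  - apply (gated_h_curve X Y A B u1 u2 h1 _ _ t (fun r => P (c r))); auto.
    intros r; unfold P; tauto.
  - apply (gated_h_curve Y X B A u2 u1 h2 _ _ t (fun r => P (c r))); auto.
    intros r; unfold P; tauto.
Qed.

Lemma Hprod_smooth : smooth_map (prodF BoldI (prodF X Y)) (prodF X Y) H.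
Proof.
  intros g Hg c' Hc'. apply Hg.
  pose proof (prod_curve_fst BoldI (prodF X Y) c' Hc') as Ht.
  pose proof (prod_curve_snd BoldI (prodF X Y) c' Hc') as Hc.
  replace (fun r => H (c' r)) with (fun r => H (fst (c' r), snd (c' r)))
    by (apply functional_extensionality; intro r; destruct (c' r); auto).
  apply Hprod_curve; auto. apply BoldI_curve_smooth_where_const; auto.
Qed.

Lemma Hprod_FCIP : FCIP_map (prodF X Y) P (prodF X Y) H.
Proof.
  intros g Hg t c Hc Ht.
  apply (proj1 (curves_spec (prodF X Y) _) (Hprod_curve t c Hc
           (FCIP_time_smooth_where_const (prodF X Y) P c t Ht)) g Hg).
Qed.

Lemma Hprod_start (t : Ityp) p : proj1_sig t = 0 -> H (t, p) = p.
Proof.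
  intros Ht. destruct p as [x y]. unfold H, Hprod; simpl. f_equal.
  - apply Hh1_start. simpl. rewrite Ht, xi_0. ring.
  - apply Hh2_start. simpl. rewrite Ht, xi_0. ring.
Qed.

(** Points of [X * B] have gate 0 in the first factor (or lie in [A]), so
    they are fixed; symmetrically for [A * Y]. *)
Lemma Hprod_rel (t : Ityp) p : P p -> H (t, p) = p.
Proof.
  destruct p as [x y]. unfold P, H, Hprod; simpl. intros [Hy|Hx].
  - assert (Hb0 : Uf u2 y = 0) by (apply HB; auto). f_equal; [|apply Hh2_rel; auto].
    destruct (Req_dec_T (Uf u1 x) 0) as [e|n]; [apply Hh1_rel, HA; auto|].
    apply Hh1_start. simpl. rewrite gate_in_B by auto. ring.
  - assert (Ha0 : Uf u1 x = 0) by (apply HA; auto). f_equal; [apply Hh1_rel; auto|].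
    destruct (Req_dec_T (Uf u2 y) 0) as [e|n]; [apply Hh2_rel, HB; auto|].
    apply Hh2_start. simpl. rewrite gate_in_B by auto. ring.
Qed.

Lemma Hprod_end_fst (t : Ityp) x y : proj1_sig t = 1 -> gate u1 u2 x y = 1 ->
  Uf u1 x < 1 -> A (fst (H (t, (x, y)))).
Proof. intros Ht Hg Hl. apply Hh1_end; auto. simpl. rewrite Ht, xi_1, Hg. ring. Qed.

Lemma Hprod_end_snd (t : Ityp) x y : proj1_sig t = 1 -> gate u2 u1 y x = 1 ->
  Uf u2 y < 1 -> B (snd (H (t, (x, y)))).
Proof. intros Ht Hg Hl. apply Hh2_end; auto. simpl. rewrite Ht, xi_1, Hg. ring. Qed.

(** The SNDR end condition: if [u (x,y) < 1], some [lam (u_i) < 1], so that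
    factor is within the region [u_i < 1/2] where its own retraction works. *)
Lemma Hprod_end (t : Ityp) p : proj1_sig t = 1 -> proj1_sig (u p) < 1 -> P (H (t, p)).
Proof.
  intros Ht. destruct p as [x y]. unfold u, uprodI; simpl. intros Hu.
  destruct (Req_dec_T (Uf u1 x) 0) as [Ha0|Ha0];
    [rewrite Hprod_rel; unfold P; simpl; auto; right; apply HA; auto|].
  destruct (Req_dec_T (Uf u2 y) 0) as [Hb0|Hb0];
    [rewrite Hprod_rel; unfold P; simpl; auto; left; apply HB; auto|].
  pose proof (Uf_range u1 x). pose proof (Uf_range u2 y).
  pose proof (lam_range (Uf u1 x)). pose proof (lam_range (Uf u2 y)).
  assert (Ha : 0 < Uf u1 x) by lra. assert (Hb : 0 < Uf u2 y) by lra.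
  assert (Hor : lam (Uf u1 x) < 1 \/ lam (Uf u2 y) < 1).
  { destruct (Rlt_dec (lam (Uf u1 x)) 1); auto. right. nra. }
  unfold P. destruct Hor as [Hl|Hl].
  - destruct (gate_cases u1 u2 x y Ha Hb) as [K|[K Kl]].
    + right. apply Hprod_end_fst; auto. apply lam_lt1 in Hl. lra.
    + left. apply Hprod_end_snd; auto. assert (Hl2 : lam (Uf u2 y) < 1) by lra.
      apply lam_lt1 in Hl2. lra.
  - destruct (gate_cases u2 u1 y x Hb Ha) as [K|[K Kl]].
    + left. apply Hprod_end_snd; auto. apply lam_lt1 in Hl. lra.
    + right. apply Hprod_end_fst; auto. assert (Hl1 : lam (Uf u1 x) < 1) by lra.
      apply lam_lt1 in Hl1. lra.
Qed.

(** The SDR end condition: if, say, [h1] retracts all of [X] at time 1, then at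
    time 1 either the first gate is 1 (the first factor lands in [A]) or the
    second gate is 1 with [lam (u2 y) < 1/2], so the second factor lands in [B]. *)
Lemma Hprod_end_SDR :
  (forall (t : Ityp) x, proj1_sig t = 1 -> A (h1 (t, x))) \/
  (forall (t : Ityp) y, proj1_sig t = 1 -> B (h2 (t, y))) ->
  forall (t : Ityp) p, proj1_sig t = 1 -> P (H (t, p)).
Proof.
  intros Hsdr t [x y] Ht.
  destruct (Req_dec_T (Uf u1 x) 0) as [Ha0|Ha0];
    [rewrite Hprod_rel; unfold P; simpl; auto; right; apply HA; auto|].
  destruct (Req_dec_T (Uf u2 y) 0) as [Hb0|Hb0];
    [rewrite Hprod_rel; unfold P; simpl; auto; left; apply HB; auto|].
  pose proof (Uf_range u1 x). pose proof (Uf_range u2 y).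
  pose proof (lam_range (Uf u1 x)). pose proof (lam_range (Uf u2 y)).
  assert (Ha : 0 < Uf u1 x) by lra. assert (Hb : 0 < Uf u2 y) by lra.
  unfold P. destruct Hsdr as [Sx|Sy].
  - destruct (gate_cases u1 u2 x y Ha Hb) as [K|[K Kl]].
    + right. apply Sx. simpl. rewrite Ht, xi_1, K. ring.
    + left. apply Hprod_end_snd; auto. assert (Hl : lam (Uf u2 y) < 1) by lra.
      apply lam_lt1 in Hl. lra.
  - destruct (gate_cases u2 u1 y x Hb Ha) as [K|[K Kl]].
    + left. apply Sy. simpl. rewrite Ht, xi_1, K. ring.
    + right. apply Hprod_end_fst; auto. assert (Hl : lam (Uf u1 x) < 1) by lra.
      apply lam_lt1 in Hl. lra.
Qed.

End Product.

Lemma product_SNDR_data (X Y : Frol) (A : X -> Prop) (B : Y -> Prop) u1 h1 u2 h2 :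
  SNDR_data X A u1 h1 -> SNDR_data Y B u2 h2 ->
  SNDR_data (prodF X Y) (fun p : prodF X Y => B (snd p) \/ A (fst p))
    (uprodI u1 u2) (Hprod u1 u2 h1 h2).
Proof.
  intros [Hu1 [HA [_ [Hf1 [Hs1 [Hr1 He1]]]]]] [Hu2 [HB [_ [Hf2 [Hs2 [Hr2 He2]]]]]].
  refine (conj _ (conj _ (conj _ (conj _ (conj _ (conj _ _)))))).
  - apply uprod_smooth; auto.
  - apply (uprod_zero X Y A B u1 u2 HA HB).
  - apply (Hprod_smooth X Y A B); auto.
  - apply Hprod_FCIP; auto.
  - apply Hprod_start; auto.
  - apply Hprod_rel; auto.
  - apply Hprod_end; auto.
Qed.

Lemma product_SDR_end (X Y : Frol) (A : X -> Prop) (B : Y -> Prop) u1 h1 u2 h2 :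
  SNDR_data X A u1 h1 -> SNDR_data Y B u2 h2 ->
  (forall (t : Ityp) x, proj1_sig t = 1 -> A (h1 (t, x))) \/
  (forall (t : Ityp) y, proj1_sig t = 1 -> B (h2 (t, y))) ->
  forall (t : Ityp) p, proj1_sig t = 1 ->
    B (snd (Hprod u1 u2 h1 h2 (t, p))) \/ A (fst (Hprod u1 u2 h1 h2 (t, p))).
Proof.
  intros [_ [HA [_ [_ [Hs1 [Hr1 He1]]]]]] [_ [HB [_ [_ [Hs2 [Hr2 He2]]]]]].
  apply Hprod_end_SDR; auto.
Qed.

Theorem theorem3 (X Y : Frol) (A : X -> Prop) (B : Y -> Prop) :
  SNDR X A -> SNDR Y B ->
  SNDR (prodF X Y) (fun p : prodF X Y => B (snd p) \/ A (fst p)) /\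
  (SDR X A \/ SDR Y B ->
   SDR (prodF X Y) (fun p : prodF X Y => B (snd p) \/ A (fst p))).
Proof.
  intros [u1 [h1 D1]] [u2 [h2 D2]]. split.
  - exists (uprodI u1 u2), (Hprod u1 u2 h1 h2). apply product_SNDR_data; auto.
  - intros [[v1 [k1 [E1 S1]]] | [v2 [k2 [E2 S2]]]].
    + exists (uprodI v1 u2), (Hprod v1 u2 k1 h2).
      split; [apply product_SNDR_data | apply product_SDR_end]; auto.
    + exists (uprodI u1 v2), (Hprod u1 v2 h1 k2).
      split; [apply product_SNDR_data | apply product_SDR_end]; auto.
Qed.
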